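(* Let $(x_0^*,x^*,y^* )$ be a basic optimal solution to Problem (II) defined in the context, and let $S^*=\{i\in\mathcal N:x_i^*\ne0\}$. Then $S^*$ is an optimal solution to Problem (I) defined in the context.
   Context: Let $\mathcal N=\{1,\dots,N\}$, $\mathcal K=\{1,\dots,K\}$. Data: $\hat v_i>0$, $r_i\in[0,1]$, $a(i,k)\in[0,1]$, multipliers $\mu_k\ge0$, and $\varepsilon_i=(\sqrt N+1)\Psi/\sqrt{n_i}$ with positive integers $n_i$ and a constant $\Psi>0$. Problem (I): maximize over $S\subseteq\mathcal N$ the quantity $\sum_{i\in S}\Big[r_i\Big(\frac{\hat v_i}{1+\sum_{j\in S}\hat v_j}+\varepsilon_i\Big)-\sum_{k\in\mathcal K}a(i,k)\mu_k\Big(\frac{\hat v_i}{1+\sum_{j\in S}\hat v_j}-\varepsilon_i\Big)\Big]$. Problem (II): maximize over $(x_0,x,y)\in\mathbb R\times\mathbb R_+^N\times\mathbb R_+^{N\times N}$ the quantity $\sum_{i\in\mathcal N}\Big[r_i\Big((\hat v_i+\varepsilon_i)x_i+\varepsilon_i\sum_{j\in\mathcal N}\hat v_jy_{ij}\Big)-\sum_{k\in\mathcal K}a(i,k)\mu_k\Big((\hat v_i-\varepsilon_i)x_i-\varepsilon_i\sum_{j\in\mathcal N}\hat v_jy_{ij}\Big)\Big]$ subject to $x_0+\sum_i\hat v_ix_i=1$, $x_i\le x_0$ for all $i$, and $y_{ij}\le x_i$, $y_{ij}\le x_j$ for all $i,j$. *)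

From HB Require Import structures.
From mathcomp Require Import all_boot all_order all_algebra.
From mathcomp Require Import reals.
Set Implicit Arguments. Unset Strict Implicit. Unset Printing Implicit Defensive.
Import Order.TTheory GRing.Theory Num.Theory.
Local Open Scope ring_scope.

(* Data: N products indexed by 'I_N, K resources indexed by 'I_K,
   v = \hat v, r, a, mu, sample sizes n, constant Psi. *)

Definition eps (R : realType) (N : nat) (Psi : R) (n : 'I_N -> nat) (i : 'I_N) : R :=
  (Num.sqrt (N%:R) + 1) * Psi / Num.sqrt ((n i)%:R).

Definition objI (R : realType) (N K : nat) (v r : 'I_N -> R) (a : 'I_N -> 'I_K -> R)
  (mu : 'I_K -> R) (Psi : R) (n : 'I_N -> nat) (S : {set 'I_N}) : R :=
  \sum_(i in S)
     (r i * (v i / (1 + \sum_(j in S) v j) + eps Psi n i)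
      - \sum_(k < K) a i k * mu k * (v i / (1 + \sum_(j in S) v j) - eps Psi n i)).

Definition optimalI (R : realType) (N K : nat) (v r : 'I_N -> R) (a : 'I_N -> 'I_K -> R)
  (mu : 'I_K -> R) (Psi : R) (n : 'I_N -> nat) (S : {set 'I_N}) : Prop :=
  forall S' : {set 'I_N}, objI v r a mu Psi n S' <= objI v r a mu Psi n S.

Definition objII (R : realType) (N K : nat) (v r : 'I_N -> R) (a : 'I_N -> 'I_K -> R)
  (mu : 'I_K -> R) (Psi : R) (n : 'I_N -> nat)
  (x0 : R) (x : 'I_N -> R) (y : 'I_N -> 'I_N -> R) : R :=
  \sum_(i < N)
    (r i * ((v i + eps Psi n i) * x i + eps Psi n i * \sum_(j < N) v j * y i j)
     - \sum_(k < K) a i k * mu k *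
         ((v i - eps Psi n i) * x i - eps Psi n i * \sum_(j < N) v j * y i j)).

Definition feasII (R : realType) (N : nat) (v : 'I_N -> R)
  (x0 : R) (x : 'I_N -> R) (y : 'I_N -> 'I_N -> R) : Prop :=
  x0 + \sum_(i < N) v i * x i = 1 /\
  (forall i, 0 <= x i /\ x i <= x0) /\
  (forall i j, 0 <= y i j /\ y i j <= x i /\ y i j <= x j).

(* A basic feasible solution of Problem (II) = a vertex (extreme point)
   of its feasible polyhedron. *)
Definition basicII (R : realType) (N : nat) (v : 'I_N -> R)
  (x0 : R) (x : 'I_N -> R) (y : 'I_N -> 'I_N -> R) : Prop :=
  feasII v x0 x y /\
  forall (x0' : R) (x' : 'I_N -> R) (y' : 'I_N -> 'I_N -> R)
         (x0'' : R) (x'' : 'I_N -> R) (y'' : 'I_N -> 'I_N -> R) (l : R),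
    feasII v x0' x' y' -> feasII v x0'' x'' y'' -> 0 < l -> l < 1 ->
    x0 = l * x0' + (1 - l) * x0'' ->
    (forall i, x i = l * x' i + (1 - l) * x'' i) ->
    (forall i j, y i j = l * y' i j + (1 - l) * y'' i j) ->
    x0' = x0'' /\ (forall i, x' i = x'' i) /\ (forall i j, y' i j = y'' i j).

Definition optimalII (R : realType) (N K : nat) (v r : 'I_N -> R) (a : 'I_N -> 'I_K -> R)
  (mu : 'I_K -> R) (Psi : R) (n : 'I_N -> nat)
  (x0 : R) (x : 'I_N -> R) (y : 'I_N -> 'I_N -> R) : Prop :=
  feasII v x0 x y /\
  forall x0' x' y', feasII v x0' x' y' ->
    objII v r a mu Psi n x0' x' y' <= objII v r a mu Psi n x0 x y.

From HB Require Import structures.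
From mathcomp Require Import all_boot all_order all_algebra.
From mathcomp Require Import reals.
From mathcomp Require Import ring lra.
Set Implicit Arguments. Unset Strict Implicit. Unset Printing Implicit Defensive.
Import Order.TTheory GRing.Theory Num.Theory.
Local Open Scope ring_scope.

(* Every S induces a feasible point of (II): x0 = 1 / (1 + sum_(j in S) v j),
   x_i = x0 on S, y_ij = x0 on S x S and 0 elsewhere; its (II)-value is the
   (I)-value of S.  Conversely, at a vertex of (II) every x_i is 0 or x0:
   scaling all coordinates by 1 - t lam and adding t to those equal to x0,
   with lam = 1 + sum_(x_i = x0) v_i so that the normalisation is kept, stays
   feasible for both signs of a small t, so by extremality it moves nothing,
   which forces lam x0 = 1 and x_i = 0 whenever x_i <> x0.  Hence x is the
   point induced by S*, and since y has nonnegative objective coefficients,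
   raising y to its bound min(x_i, x_j) bounds the optimum of (II), and so
   the value of every S, by the value of S*. *)

Section SetSolution.
Variables (R : realType) (N K : nat) (v r : 'I_N -> R) (a : 'I_N -> 'I_K -> R).
Variables (mu : 'I_K -> R) (Psi : R) (n : 'I_N -> nat).
Hypothesis v_ge0 : forall i, 0 <= v i.

Lemma eps_ge0 i : 0 <= Psi -> 0 <= eps Psi n i.
Proof. by move=> Psi_ge0; rewrite divr_ge0 ?mulr_ge0 ?addr_ge0 ?sqrtr_ge0. Qed.

Lemma ler_objII x0 x0' x x' y y' :
  (forall i, 0 <= r i) -> (forall i k, 0 <= a i k) -> (forall k, 0 <= mu k) ->
  0 <= Psi -> x =1 x' -> (forall i j, y i j <= y' i j) ->
  objII v r a mu Psi n x0 x y <= objII v r a mu Psi n x0' x' y'.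
Proof.
move=> r_ge0 a_ge0 mu_ge0 Psi_ge0 eqx ley; apply: ler_sum => i _.
have e_ge0 := eps_ge0 i Psi_ge0.
have le_sum : \sum_j v j * y i j <= \sum_j v j * y' i j.
  by apply: ler_sum => j _; rewrite ler_wpM2l.
rewrite eqx; apply: lerB; first by rewrite ler_wpM2l // lerD2l ler_wpM2l.
by apply: ler_sum => k _; rewrite ler_wpM2l ?mulr_ge0 // lerD2l lerN2 ler_wpM2l.
Qed.

Definition x0_of (S : {set 'I_N}) : R := (1 + \sum_(j in S) v j)^-1.
Definition x_of (S : {set 'I_N}) (i : 'I_N) : R :=
  if i \in S then x0_of S else 0.
Definition y_of (S : {set 'I_N}) (i j : 'I_N) : R :=
  if i \in S then x_of S j else 0.

Lemma x0_of_gt0 S : 0 < x0_of S.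
Proof. by rewrite invr_gt0 ltr_wpDr ?ltr01 ?sumr_ge0. Qed.

Lemma sum_x_of S : \sum_i v i * x_of S i = 1 - x0_of S.
Proof.
have W_neq0 : 1 + \sum_(j in S) v j != 0.
  by rewrite -invr_eq0 gt_eqF ?x0_of_gt0.
rewrite (eq_bigr (fun i => (if i \in S then v i else 0) * x0_of S)); last first.
  by move=> i _; rewrite /x_of; case: (i \in S); rewrite ?mulr0 ?mul0r.
rewrite -mulr_suml -big_mkcond /= /x0_of.
apply: (mulIf W_neq0).
by rewrite divfK // mulrBl mul1r mulVf // addrAC subrr add0r.
Qed.

Lemma feasII_of_set S : feasII v (x0_of S) (x_of S) (y_of S).
Proof.
have x0_gt0 := x0_of_gt0 S.
split; last split; first by rewrite sum_x_of addrC subrK.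
  by move=> i; rewrite /x_of; case: (i \in S); lra.
by move=> i j; rewrite /y_of /x_of; case: (i \in S); case: (j \in S); lra.
Qed.

Lemma feasII_le_y_of x0 x y S :
  feasII v x0 x y -> x =1 x_of S -> forall i j, y i j <= y_of S i j.
Proof.
move=> [_ [_ hy]] xE i j; have [_ [le_i le_j]] := hy i j.
rewrite /y_of -xE; case: ifP => // iS.
by rewrite xE /x_of iS in le_i.
Qed.

Lemma objII_of_set S :
  objII v r a mu Psi n (x0_of S) (x_of S) (y_of S) = objI v r a mu Psi n S.
Proof.
rewrite /objII /objI [RHS]big_mkcond /=; apply: eq_bigr => i _.
have sum_y : \sum_j v j * y_of S i j = if i \in S then 1 - x0_of S else 0.
  rewrite /y_of; case: (i \in S); first exact: sum_x_of.
  by rewrite big1 // => j _; rewrite mulr0.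
rewrite sum_y /x_of -/(x0_of S); case: (i \in S).
  set e := eps Psi n i; set x0S := x0_of S.
  rewrite (_ : (v i + e) * x0S + e * (1 - x0S) = v i * x0S + e); last by ring.
  congr (_ - _); apply: eq_bigr => k _; congr (_ * _); ring.
rewrite !mulr0 subrr addr0 mulr0 big1 ?subr0 // => k _.
by rewrite mulr0.
Qed.

End SetSolution.

Lemma exists_pos_lower_bound (R : realFieldType) (I : finType)
    (P : pred I) (f : I -> R) (c : R) :
  0 < c -> (forall i, P i -> 0 < f i) ->
  exists2 g, 0 < g & g <= c /\ forall i, P i -> g <= f i.
Proof.
move=> c_gt0 f_gt0; exists (\big[Order.min/c]_(i | P i) f i).
  exact: lt_bigmin.
by split=> [|i Pi]; [exact: bigmin_le_id | exact: bigmin_le_cond].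
Qed.

Section Perturb.
Variables (R : realFieldType) (x0 lam t : R).

Definition perturb (z : R) : R := z + t * ((z == x0)%:R - lam * z).

Hypotheses (lam_ge0 : 0 <= lam) (t_lam : 2 * `|t| * lam <= 1).

Let c := 1 - t * lam.

Let c_ge : 1 / 2 <= c.
Proof.
by have := ler_wpM2r lam_ge0 (ler_norm t); move: t_lam; rewrite -mulrA /c; lra.
Qed.

Let perturb_x0 : perturb x0 = c * x0 + t.
Proof. by rewrite /perturb eqxx /c /=; ring. Qed.

Let perturb_neq z : z != x0 -> perturb z = c * z.
Proof. by move=> /negbTE z_neq; rewrite /perturb z_neq /c /=; ring. Qed.

Lemma perturb_bounds z : 2 * `|t| <= x0 -> 0 <= z <= x0 ->
  (z != x0 -> 2 * `|t| <= x0 - z) -> 0 <= perturb z <= perturb x0.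
Proof.
move=> t_x0 /andP[z_ge0 z_le] gap.
have /andP[t_ge t_le] : - `|t| <= t <= `|t| by rewrite -ler_norml.
have half_le w : 0 <= w -> w / 2 <= c * w.
  by move=> w_ge0; have := ler_wpM2r w_ge0 c_ge; lra.
case: eqVneq gap => [-> _ | z_neq /(_ isT) gap]; rewrite perturb_x0.
  by have := half_le _ (le_trans z_ge0 z_le); lra.
have := half_le _ z_ge0; have := half_le (x0 - z); rewrite subr_ge0 mulrBr.
by rewrite perturb_neq //; lra.
Qed.

Lemma perturb_le z w : z <= w -> w < x0 -> perturb z <= perturb w.
Proof.
move=> le_zw lt_w; rewrite !perturb_neq ?lt_eqF ?(le_lt_trans le_zw) //.
by rewrite ler_wpM2l //; have := c_ge; lra.
Qed.

End Perturb.

Section Vertex.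
Variables (R : realType) (N : nat) (v : 'I_N -> R).
Variables (x0 : R) (x : 'I_N -> R) (y : 'I_N -> 'I_N -> R).
Hypothesis v_ge0 : forall i, 0 <= v i.

Lemma feasII_x0_gt0 : feasII v x0 x y -> 0 < x0.
Proof.
move=> [sum1 [hx _]].
have W_gt0 : 0 < 1 + \sum_i v i by rewrite ltr_wpDr ?sumr_ge0.
have : 1 <= x0 * (1 + \sum_i v i).
  rewrite -[leLHS]sum1 mulrDr mulr1 lerD2l mulr_sumr; apply: ler_sum => i _.
  by rewrite mulrC ler_wpM2r //; case: (hx i).
by rewrite -(pmulr_lgt0 _ W_gt0); apply: lt_le_trans ltr01.
Qed.

Lemma basicII_dir d0 dx dy t : basicII v x0 x y -> 0 < t ->
  (forall s, `|s| = t -> feasII v (x0 + s * d0)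
     (fun i => x i + s * dx i) (fun i j => y i j + s * dy i j)) ->
  [/\ d0 = 0, forall i, dx i = 0 & forall i j, dy i j = 0].
Proof.
move=> [_ extreme] t_gt0 feas.
have norm_t : `|t| = t by rewrite gtr0_norm.
have feas_t := feas t norm_t.
have feas_Nt := feas (- t) (etrans (normrN t) norm_t).
have mid z d : z = 1 / 2 * (z + t * d) + (1 - 1 / 2) * (z + - t * d) by lra.
have eq_dir z d : z + t * d = z + - t * d -> d = 0.
  move=> /addrI/eqP; rewrite mulNr -subr_eq0 opprK -mulr2n mulrn_eq0 /=.
  by rewrite mulf_eq0 gt_eqF //= => /eqP.
have [||e0 [ex ey]] := extreme _ _ _ _ _ _ (1 / 2) feas_t feas_Nt _ _
  (mid _ _) (fun i => mid _ _) (fun i j => mid _ _); try lra.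
split=> [|i|i j]; first exact: eq_dir e0; first exact: eq_dir (ex i).
exact: eq_dir (ey i j).
Qed.

Let lam := 1 + \sum_(i | x i == x0) v i.

Lemma feasII_perturb t : feasII v x0 x y ->
  2 * `|t| * lam <= 1 -> 2 * `|t| <= x0 ->
  (forall i, x i != x0 -> 2 * `|t| <= x0 - x i) ->
  (forall i j, y i j != x0 -> 2 * `|t| <= x0 - y i j) ->
  feasII v (perturb x0 lam t x0)
    (fun i => perturb x0 lam t (x i)) (fun i j => perturb x0 lam t (y i j)).
Proof.
move=> [sum1 [hx hy]] t_lam t_x0 gap_x gap_y.
have lam_ge0 : 0 <= lam by rewrite addr_ge0 ?sumr_ge0.
have x_bounds i : 0 <= x i <= x0 by case: (hx i) => -> ->.
have bounds z := perturb_bounds lam_ge0 t_lam (z := z) t_x0.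
split; [|split].
- have sum_ind : \sum_i v i * (x i == x0)%:R = lam - 1.
    rewrite /lam addrAC subrr add0r [RHS]big_mkcond; apply: eq_bigr => i _.
    by case: (x i == x0); rewrite ?mulr1 ?mulr0.
  rewrite (eq_bigr (fun i =>
      (1 - t * lam) * (v i * x i) + t * (v i * (x i == x0)%:R))); last first.
    by move=> i _; rewrite /perturb; ring.
  rewrite big_split /= -!mulr_sumr sum_ind.
  have -> : \sum_i v i * x i = 1 - x0 by rewrite -sum1 addrAC subrr add0r.
  by rewrite /perturb eqxx /=; ring.
- by move=> i; apply/andP; apply: bounds (x_bounds i) (gap_x i).
move=> i j; have [y_ge0 [y_le_i y_le_j]] := hy i j.
have y_bounds : 0 <= y i j <= x0.
  by rewrite y_ge0 (le_trans y_le_i) //; case/andP: (x_bounds i).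
have /andP[py_ge0 py_le] := bounds _ y_bounds (gap_y i j).
have le_perturb k :
    y i j <= x k -> perturb x0 lam t (y i j) <= perturb x0 lam t (x k).
  move=> y_le; case: (eqVneq (x k) x0) => [-> // | x_neq].
  apply: perturb_le => //; rewrite lt_neqAle x_neq.
  by case/andP: (x_bounds k).
by split=> //; split; apply: le_perturb.
Qed.

Lemma exists_perturb_step : feasII v x0 x y ->
  exists2 t, 0 < t & [/\ 2 * t * lam <= 1, 2 * t <= x0,
    forall i, x i != x0 -> 2 * t <= x0 - x i &
    forall i j, y i j != x0 -> 2 * t <= x0 - y i j].
Proof.
move=> feas; have [_ [hx hy]] := feas.
have x0_gt0 := feasII_x0_gt0 feas.
have lam_gt0 : 0 < lam by rewrite ltr_wpDr ?sumr_ge0.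
have gap_x i : x i != x0 -> 0 < x0 - x i.
  by rewrite subr_gt0 lt_neqAle => ->; case: (hx i).
have gap_y (p : 'I_N * 'I_N) : y p.1 p.2 != x0 -> 0 < x0 - y p.1 p.2.
  rewrite subr_gt0 lt_neqAle => -> /=; have [_ [y_le _]] := hy p.1 p.2.
  by apply: le_trans y_le _; case: (hx p.1).
have [|gx gx_gt0 [gx_le gx_P]] :=
  exists_pos_lower_bound (c := Order.min x0 lam^-1) _ gap_x.
  by rewrite lt_min x0_gt0 invr_gt0.
have [g g_gt0 [g_le g_P]] := exists_pos_lower_bound gx_gt0 gap_y.
have /andP[g_x0 g_lam] : (g <= x0) && (g <= lam^-1).
  by rewrite -le_min (le_trans g_le).
exists (g / 2); first by rewrite divr_gt0.
have -> : 2 * (g / 2) = g by rewrite mulrC divfK ?pnatr_eq0.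
split=> // [|i x_neq|i j y_neq].
- by rewrite -ler_pdivlMr // div1r.
- exact: le_trans g_le (gx_P i x_neq).
- exact: g_P (i, j) y_neq.
Qed.

Lemma basicII_two_valued :
  basicII v x0 x y -> x0 * lam = 1 /\ forall i, x i != x0 -> x i = 0.
Proof.
move=> basic; have feas := basic.1.
have [t t_gt0 [t_lam t_x0 gap_x gap_y]] := exists_perturb_step feas.
have feas_s s : `|s| = t -> feasII v (perturb x0 lam s x0)
    (fun i => perturb x0 lam s (x i)) (fun i j => perturb x0 lam s (y i j)).
  by move=> s_t; apply: feasII_perturb; rewrite ?s_t.
have [d0 dx _] := basicII_dir (d0 := (x0 == x0)%:R - lam * x0)
  (dx := fun i => (x i == x0)%:R - lam * x i)
  (dy := fun i j => (y i j == x0)%:R - lam * y i j) basic t_gt0 feas_s.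
split; first by move/eqP: d0; rewrite eqxx subr_eq0 mulrC => /eqP <-.
move=> i x_neq; move/eqP: (dx i).
rewrite (negbTE x_neq) sub0r oppr_eq0 mulf_eq0.
by rewrite gt_eqF ?ltr_wpDr ?sumr_ge0 //= => /eqP.
Qed.

Lemma basicII_x_of : basicII v x0 x y -> x =1 x_of v [set i | x i != 0].
Proof.
move=> /basicII_two_valued [x0_lam x_0].
have x0_neq0 : x0 != 0.
  apply/eqP => x0_0; move: x0_lam; rewrite x0_0 mul0r => /eqP.
  by rewrite eq_sym oner_eq0.
have supp j : (j \in [set i | x i != 0]) = (x j == x0).
  by rewrite inE; case: (eqVneq (x j) x0) => [-> // | /x_0 ->]; rewrite eqxx.
have x0E : x0 = x0_of v [set i | x i != 0].
  rewrite /x0_of (eq_bigl _ _ supp) -/lam.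
  by apply/esym/mulr1_eq; rewrite mulrC.
by move=> i; rewrite /x_of supp -x0E; case: eqVneq => [-> | /x_0].
Qed.

End Vertex.

Theorem theoremC1 (R : realType) (N K : nat)
  (v r : 'I_N -> R) (a : 'I_N -> 'I_K -> R) (mu : 'I_K -> R)
  (n : 'I_N -> nat) (Psi : R)
  (hv : forall i, 0 < v i)
  (hr : forall i, 0 <= r i <= 1)
  (ha : forall i k, 0 <= a i k <= 1)
  (hmu : forall k, 0 <= mu k)
  (hn : forall i, (0 < n i)%N)
  (hPsi : 0 < Psi)
  (x0 : R) (x : 'I_N -> R) (y : 'I_N -> 'I_N -> R)
  (hbasic : basicII v x0 x y)
  (hopt : optimalII v r a mu Psi n x0 x y) :
  optimalI v r a mu Psi n [set i | x i != 0].
Proof.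
have v_ge0 i : 0 <= v i := ltW (hv i).
have r_ge0 i : 0 <= r i by case/andP: (hr i).
have a_ge0 i k : 0 <= a i k by case/andP: (ha i k).
have xE := basicII_x_of v_ge0 hbasic.
have y_le := feasII_le_y_of hbasic.1 xE.
move=> S; rewrite -!(objII_of_set r a mu Psi n v_ge0).
apply: le_trans (hopt.2 _ _ _ (feasII_of_set v_ge0 S)) _.
exact: ler_objII r_ge0 a_ge0 hmu (ltW hPsi) xE y_le.
Qed.
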